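(* For every $2+1$-complex $K\subset\mathbb{R}^3$, the set $Extr(K)$ of extremal points of $K$ is finite.
   Context: A horizontal segment is one contained in a plane $\{z=c\}$; a vertical segment is one parallel to the $z$ axis. A $2+1$-complex is a closed subset of $\mathbb{R}^3$ that is the union of a finite list $L$ of elements, each of one of the following kinds: points; relatively open horizontal segments whose two endpoints belong to $L$; relatively open vertical segments whose two endpoints belong to $L$; relatively open triangles in a horizontal plane whose three boundary segments belong to $L$; relatively open rectangles in a vertical plane, two of whose sides are parallel to the $z$ axis, whose four boundary segments belong to $L$; open subsets of $\mathbb{R}^3$ whose boundary is a union of elements of the previous kinds, all belonging to $L$. A point $p\in K$ is extremal if no relatively open horizontal or vertical segment contained in $K$ contains $p$. *)

From Stdlib Require Import Reals List.
Open Scope R_scope.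

Definition pt : Type := (R * R * R)%type.
Definition px (p : pt) : R := fst (fst p).
Definition py (p : pt) : R := snd (fst p).
Definition pz (p : pt) : R := snd p.
Definition mkpt (x y z : R) : pt := (x, y, z).

Definition pset := pt -> Prop.
Definition seteq (S T : pset) : Prop := forall x, S x <-> T x.
Definition single (p : pt) : pset := fun x => x = p.

Definition dist2 (p q : pt) : R :=
  (px p - px q)^2 + (py p - py q)^2 + (pz p - pz q)^2.
Definition is_open (S : pset) : Prop :=
  forall p, S p -> exists e, 0 < e /\ forall q, dist2 p q < e * e -> S q.
Definition closure (S : pset) : pset :=
  fun p => forall e, 0 < e -> exists q, S q /\ dist2 p q < e * e.
Definition is_closed (S : pset) : Prop := forall p, closure S p -> S p.
Definition boundary (S : pset) : pset :=
  fun p => closure S p /\ closure (fun q => ~ S q) p.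

Definition open_seg (a b : pt) : pset := fun p =>
  exists t, 0 < t < 1 /\
    p = mkpt ((1 - t) * px a + t * px b) ((1 - t) * py a + t * py b)
             ((1 - t) * pz a + t * pz b).

Definition open_tri (a b c : pt) : pset := fun p =>
  exists l m n, 0 < l /\ 0 < m /\ 0 < n /\ l + m + n = 1 /\
    p = mkpt (l * px a + m * px b + n * px c) (l * py a + m * py b + n * py c)
             (l * pz a + m * pz b + n * pz c).

Definition open_rect (a b : pt) (h : R) : pset := fun p =>
  exists s t, 0 < s < 1 /\ 0 < t < h /\
    p = mkpt ((1 - s) * px a + s * px b) ((1 - s) * py a + s * py b)
             ((1 - s) * pz a + s * pz b + t).

Definition lift (a : pt) (h : R) : pt := mkpt (px a) (py a) (pz a + h).

Definition horizontal (a b : pt) : Prop := pz a = pz b.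
Definition vertical (a b : pt) : Prop := px a = px b /\ py a = py b.

Definition inL (L : list pset) (S : pset) : Prop :=
  exists T, In T L /\ seteq T S.

Definition kind_point (S : pset) : Prop := exists p, seteq S (single p).

Definition kind_hseg (L : list pset) (S : pset) : Prop :=
  exists a b, a <> b /\ horizontal a b /\ seteq S (open_seg a b) /\
    inL L (single a) /\ inL L (single b).

Definition kind_vseg (L : list pset) (S : pset) : Prop :=
  exists a b, a <> b /\ vertical a b /\ seteq S (open_seg a b) /\
    inL L (single a) /\ inL L (single b).

Definition noncollinear_h (a b c : pt) : Prop :=
  (px b - px a) * (py c - py a) - (py b - py a) * (px c - px a) <> 0.

Definition kind_tri (L : list pset) (S : pset) : Prop :=
  exists a b c, pz a = pz b /\ pz b = pz c /\ noncollinear_h a b c /\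
    seteq S (open_tri a b c) /\
    inL L (open_seg a b) /\ inL L (open_seg b c) /\ inL L (open_seg c a).

Definition kind_rect (L : list pset) (S : pset) : Prop :=
  exists a b h, a <> b /\ horizontal a b /\ 0 < h /\
    seteq S (open_rect a b h) /\
    inL L (open_seg a b) /\ inL L (open_seg (lift a h) (lift b h)) /\
    inL L (open_seg a (lift a h)) /\ inL L (open_seg b (lift b h)).

Definition lower_kind (L : list pset) (S : pset) : Prop :=
  kind_point S \/ kind_hseg L S \/ kind_vseg L S \/ kind_tri L S \/ kind_rect L S.

Definition kind_open (L : list pset) (S : pset) : Prop :=
  is_open S /\
  exists Ls : list pset,
    (forall T, In T Ls -> inL L T /\ lower_kind L T) /\
    seteq (boundary S) (fun x => exists T, In T Ls /\ T x).

Definition kind (L : list pset) (S : pset) : Prop :=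
  lower_kind L S \/ kind_open L S.

Definition complex21 (K : pset) : Prop :=
  is_closed K /\
  exists L : list pset,
    (forall S, In S L -> kind L S) /\
    seteq K (fun x => exists S, In S L /\ S x).

Definition extremal (K : pset) (p : pt) : Prop :=
  K p /\
  ~ (exists a b, a <> b /\ (horizontal a b \/ vertical a b) /\
       (forall x, open_seg a b x -> K x) /\ open_seg a b p).

Definition Extr (K : pset) : pset := extremal K.

Definition finite_set (S : pset) : Prop :=
  exists l : list pt, forall p, S p -> In p l.

From Stdlib Require Import Reals List Lra Psatz Classical.
Open Scope R_scope.

(* Every element of a complex other than a point contains, around each of its
   points, an open horizontal or vertical segment: a segment element is one, a
   horizontal triangle contains a translate of one of its edges, a vertical
   rectangle contains short vertical segments, an open set short segments in
   every direction.  Hence an extremal point lies in a point element, and there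
   are only finitely many of those. *)

Definition axis_parallel (v : pt) : Prop :=
  (pz v = 0 /\ (px v <> 0 \/ py v <> 0)) \/ (px v = 0 /\ py v = 0 /\ pz v <> 0).

Definition pt_along (p v : pt) (s : R) : pt :=
  mkpt (px p + s * px v) (py p + s * py v) (pz p + s * pz v).

Lemma not_extremal_axis_segment (K : pset) (p v : pt) (d : R) :
  0 < d -> axis_parallel v ->
  (forall s, -d < s < d -> K (pt_along p v s)) -> ~ extremal K p.
Proof.
  intros Hd Hv HK [_ Hne]. apply Hne.
  exists (pt_along p v (- (d / 2))), (pt_along p v (d / 2)).
  split; [|split; [|split]].
  - unfold pt_along, mkpt. intro E. injection E. intros Ez Ey Ex.
    destruct Hv as [[_ [Hx|Hy]]|[_ [_ Hz]]]; [apply Hx|apply Hy|apply Hz]; nra.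
  - destruct Hv as [[Hz _]|[Hx [Hy _]]]; [left|right].
    + unfold horizontal, pt_along. rewrite Hz. unfold mkpt, pz; simpl. ring.
    + unfold vertical, pt_along. rewrite Hx, Hy. unfold mkpt, px, py; simpl. split; ring.
  - intros x [t [Ht ->]].
    replace (mkpt _ _ _) with (pt_along p v ((2 * t - 1) * (d / 2))).
    + apply HK. nra.
    + unfold pt_along, mkpt, px, py, pz; simpl. f_equal; [f_equal|]; field.
  - exists (1 / 2). split; [lra|].
    destruct p as [[x y] z]; unfold pt_along, mkpt, px, py, pz; simpl.
    f_equal; [f_equal|]; field.
Qed.

Lemma not_extremal_open_seg (K : pset) (a b p : pt) :
  a <> b -> horizontal a b \/ vertical a b ->
  (forall x, open_seg a b x -> K x) -> open_seg a b p -> ~ extremal K p.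
Proof. intros Hab Hdir Hseg Hp [_ Hne]. apply Hne. exists a, b. auto. Qed.

Lemma not_extremal_open_tri (K : pset) (a b c p : pt) :
  pz a = pz b -> noncollinear_h a b c ->
  (forall x, open_tri a b c x -> K x) -> open_tri a b c p -> ~ extremal K p.
Proof.
  intros Hab Hnc Htri [l [m [n [Hl [Hm [Hn [Hsum Hp]]]]]]].
  apply (not_extremal_axis_segment K p (mkpt (px b - px a) (py b - py a) (pz b - pz a))
           (Rmin l m)).
  - now apply Rmin_glb_lt.
  - left. change (pz b - pz a = 0 /\ (px b - px a <> 0 \/ py b - py a <> 0)).
    split; [lra|].
    destruct (classic (px b - px a = 0)) as [Ex|Ex]; [|now left].
    right. intro Ey. apply Hnc. rewrite Ex, Ey. ring.
  - intros s Hs. apply Htri.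
    pose proof (Rmin_l l m). pose proof (Rmin_r l m).
    exists (l - s), (m + s), n. repeat split; try lra.
    rewrite Hp. unfold pt_along, mkpt, px, py, pz; simpl. f_equal; [f_equal|]; ring.
Qed.

Lemma not_extremal_open_rect (K : pset) (a b p : pt) (h : R) :
  (forall x, open_rect a b h x -> K x) -> open_rect a b h p -> ~ extremal K p.
Proof.
  intros Hrect [s [t [Hs [Ht Hp]]]].
  apply (not_extremal_axis_segment K p (mkpt 0 0 1) (Rmin t (h - t))).
  - apply Rmin_glb_lt; lra.
  - right. unfold mkpt, px, py, pz; simpl. repeat split; lra.
  - intros u Hu. apply Hrect.
    pose proof (Rmin_l t (h - t)). pose proof (Rmin_r t (h - t)).
    exists s, (t + u). split; [lra|split; [lra|]].
    rewrite Hp. unfold pt_along, mkpt, px, py, pz; simpl. f_equal; [f_equal|]; ring.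
Qed.

Lemma not_extremal_open (K S : pset) (p : pt) :
  is_open S -> (forall x, S x -> K x) -> S p -> ~ extremal K p.
Proof.
  intros HS HSK Sp. destruct (HS p Sp) as [e [He Hball]].
  apply (not_extremal_axis_segment K p (mkpt 1 0 0) e He).
  - left. unfold mkpt, px, py, pz; simpl. split; [reflexivity|left; lra].
  - intros s Hs. apply HSK, Hball.
    unfold dist2, pt_along, mkpt, px, py, pz; simpl. nra.
Qed.

Lemma extremal_kind_point (L : list pset) (K S : pset) (p : pt) :
  kind L S -> (forall x, S x -> K x) -> S p -> extremal K p -> kind_point S.
Proof.
  intros [[Hk|[Hk|[Hk|[Hk|Hk]]]]|Hk] HSK Sp Ep; [exact Hk|exfalso..].
  - destruct Hk as [a [b [Hab [Hh [Hs _]]]]].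
    apply (not_extremal_open_seg K a b p Hab (or_introl Hh));
      [intros x Hx; apply HSK, Hs, Hx|apply Hs, Sp|exact Ep].
  - destruct Hk as [a [b [Hab [Hv [Hs _]]]]].
    apply (not_extremal_open_seg K a b p Hab (or_intror Hv));
      [intros x Hx; apply HSK, Hs, Hx|apply Hs, Sp|exact Ep].
  - destruct Hk as [a [b [c [Hab [_ [Hnc [Hs _]]]]]]].
    apply (not_extremal_open_tri K a b c p Hab Hnc);
      [intros x Hx; apply HSK, Hs, Hx|apply Hs, Sp|exact Ep].
  - destruct Hk as [a [b [h [_ [_ [_ [Hs _]]]]]]].
    apply (not_extremal_open_rect K a b p h);
      [intros x Hx; apply HSK, Hs, Hx|apply Hs, Sp|exact Ep].
  - exact (not_extremal_open K S p (proj1 Hk) HSK Sp Ep).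
Qed.

Lemma kind_point_support (L : list pset) :
  exists l : list pt, forall S, In S L -> kind_point S -> forall p, S p -> In p l.
Proof.
  induction L as [|S0 L [l Hl]].
  - exists nil. intros S [].
  - destruct (classic (kind_point S0)) as [[q Hq]|Hn].
    + exists (q :: l). intros S [<-|HS] Hk p Sp.
      * left. symmetry. exact (proj1 (Hq p) Sp).
      * right. eapply Hl; eauto.
    + exists l. intros S [<-|HS] Hk p Sp; [contradiction|eapply Hl; eauto].
Qed.

Theorem lemma2p3 : forall K : pset, complex21 K -> finite_set (Extr K).
Proof.
  intros K [_ [L [HL HK]]].
  destruct (kind_point_support L) as [l Hl].
  exists l. intros p Ep.
  destruct (proj1 (HK p) (proj1 Ep)) as [S [InS Sp]].
  apply (Hl S InS); auto.
  apply (extremal_kind_point L K S p); auto.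
  intros x Sx. apply HK. eauto.
Qed.
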